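(* Let $\alpha,\beta$ be compositions with $\beta\subseteq\alpha$, let $n=|\alpha/\beta|$, and let $M\in\mathrm{SET}(\alpha/\beta)$. Then $M$ is a minimal element of the poset $\mathrm{SET}(\alpha/\beta)$ if and only if, for every $i=1,2,\ldots,n-1$, one of the following holds in $M$: (1) $i$ and $i+1$ lie in consecutive cells of the same row of $\alpha/\beta$; (2) $i$ and $i+1$ lie in the same column of $\alpha/\beta$ (with $i+1$ above $i$ and no cell of $\alpha/\beta$ between them); (3) $i$ lies in a row of $\alpha/\beta$ strictly higher than the row of $i+1$.
   Context: A composition $\alpha=(\alpha_1,\ldots,\alpha_k)$ is a finite sequence of positive integers, $|\alpha|=\sum\alpha_i$, $\ell(\alpha)=k$. Its diagram has rows numbered from the bottom (row 1 is lowest), row $i$ consisting of the cells in columns $1,\ldots,\alpha_i$. For compositions with $\beta\subseteq\alpha$ (i.e. $\ell(\beta)\le\ell(\alpha)$ and $\beta_j\le\alpha_j$ for $j\le\ell(\beta)$), the skew diagram $\alpha/\beta$ consists of the cells in row $i$ and column $j$ with $\beta_i<j\le\alpha_i$ (where $\beta_i=0$ for $i>\ell(\beta)$); $|\alpha/\beta|=|\alpha|-|\beta|$. A standard immaculate tableau of shape $\alpha/\beta$ is a bijective filling of the cells of $\alpha/\beta$ with $1,\ldots,|\alpha/\beta|$ such that rows increase left to right and the entries in column 1 increase bottom to top; $\mathrm{SIT}(\alpha/\beta)$ is the set of these. $\mathrm{SET}(\alpha/\beta)\subseteq\mathrm{SIT}(\alpha/\beta)$ is the set of such fillings in which all rows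 increase left to right and all columns increase bottom to top (standard extended tableaux). For $1\le i\le n-1$ and $T\in\mathrm{SIT}(\alpha/\beta)$, the row-strict operator is $\pi_i(T)=T$ if $i+1$ is in a strictly higher row than $i$; $\pi_i(T)=s_i(T)$ (the tableau obtained by swapping the entries $i$ and $i+1$) if $i+1$ is in a strictly lower row than $i$; and $\pi_i(T)=0$ otherwise. This makes $\mathrm{SIT}(\alpha/\beta)$ a poset with $T\le T'$ iff $T'$ is obtained from $T$ by applying a sequence of operators $\pi_{i}$ (with all intermediate results nonzero); $\mathrm{SET}(\alpha/\beta)$ carries the induced order. An element $M$ is minimal in $\mathrm{SET}(\alpha/\beta)$ if there is no $T\in\mathrm{SET}(\alpha/\beta)$ with $T\neq M$ and $T<M$. *)

From mathcomp Require Import all_boot.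
Set Implicit Arguments. Unset Strict Implicit. Unset Printing Implicit Defensive.

(* A composition: finite sequence of positive integers.  alpha_i = nth 0 alpha (i-1). *)
Definition composition (a : seq nat) : bool := all (fun x => 0 < x) a.

Definition subcomp (b a : seq nat) : bool :=
  (size b <= size a) && all (fun j => nth 0 b j <= nth 0 a j) (iota 0 (size b)).

(* A cell is (row, column), both 1-indexed, rows numbered from the bottom. *)
Definition cell := (nat * nat)%type.

(* cell (r, j) belongs to alpha/beta iff 1 <= r <= l(alpha), beta_r < j <= alpha_r
   (beta_r = 0 for r > l(beta)) *)
Definition in_skew (a b : seq nat) (c : cell) : bool :=
  [&& 0 < c.1, c.1 <= size a, nth 0 b c.1.-1 < c.2 & c.2 <= nth 0 a c.1.-1].

Definition skew_cells (a b : seq nat) : seq cell :=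
  flatten [seq [seq (r.+1, j) | j <- iota (nth 0 b r).+1 (nth 0 a r - nth 0 b r)]
          | r <- iota 0 (size a)].

(* A bijective filling of alpha/beta with 1..n is encoded by the sequence w of
   cells, where w`_(k-1) is the cell containing the entry k.  It is a bijective
   filling iff w is a permutation of the cells of alpha/beta. *)
Definition tableau := seq cell.

Definition pos (w : tableau) (k : nat) : cell := nth (0, 0) w k.-1.
Definition entry (w : tableau) (c : cell) : nat := (index c w).+1.

Definition is_filling (a b : seq nat) (w : tableau) : bool :=
  perm_eq w (skew_cells a b).

Definition is_SIT (a b : seq nat) (w : tableau) : Prop :=
  is_filling a b w /\
  (forall r j j', in_skew a b (r, j) -> in_skew a b (r, j') -> j < j' ->
     entry w (r, j) < entry w (r, j')) /\
  (forall r r', in_skew a b (r, 1) -> in_skew a b (r', 1) -> r < r' ->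
     entry w (r, 1) < entry w (r', 1)).

Definition is_SET (a b : seq nat) (w : tableau) : Prop :=
  is_filling a b w /\
  (forall r j j', in_skew a b (r, j) -> in_skew a b (r, j') -> j < j' ->
     entry w (r, j) < entry w (r, j')) /\
  (forall r r' j, in_skew a b (r, j) -> in_skew a b (r', j) -> r < r' ->
     entry w (r, j) < entry w (r', j)).

Definition swap_entries (i : nat) (w : tableau) : tableau :=
  [seq (if k == i.-1 then nth (0,0) w i
        else if k == i then nth (0,0) w i.-1 else nth (0,0) w k)
  | k <- iota 0 (size w)].

(* The row-strict operator pi_i; None stands for 0. *)
Definition pi_op (i : nat) (w : tableau) : option tableau :=
  let c := pos w i in let d := pos w i.+1 in
  if c.1 < d.1 then Some w
  else if d.1 < c.1 then Some (swap_entries i w)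
  else None.

Definition pi_step (n : nat) (T T' : tableau) : Prop :=
  exists i, 0 < i /\ i < n /\ pi_op i T = Some T'.

Inductive pi_le (n : nat) : tableau -> tableau -> Prop :=
| pi_le_refl T : pi_le n T T
| pi_le_step T T' T'' : pi_step n T T' -> pi_le n T' T'' -> pi_le n T T''.

Definition skew_size (a b : seq nat) : nat := sumn a - sumn b.

Definition minimal_SET (a b : seq nat) (M : tableau) : Prop :=
  is_SET a b M /\
  ~ (exists T, is_SET a b T /\ T <> M /\ pi_le (skew_size a b) T M).

From mathcomp Require Import all_boot zify.
Set Implicit Arguments. Unset Strict Implicit. Unset Printing Implicit Defensive.

(* Row- and column-strictness force (1), resp. (2), as soon as i and i+1 share
   a row, resp. a column.  Otherwise, unless (3) holds, i+1 lies strictly higher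
   than i and in another column, so exchanging them yields a standard extended
   tableau T with pi_i(T) = M, and M is not minimal.  Conversely, a chain T < M
   ends with a step pi_i(W) = M that swaps i and i+1, so in M the entry i+1 is
   strictly higher than i; this rules out (1) and (3), hence they are in one
   column with i+1 above i.  But an operator pi_j never reverses two entries
   whose cells lie in strictly increasing rows, so the column-strictness of T
   survives in W, where i+1 sits below i in that column: a contradiction. *)

Lemma mem_skew_cells a b c : (c \in skew_cells a b) = in_skew a b c.
Proof.
apply/flatten_mapP/idP => [[r] | ].
  rewrite mem_iota => hr /mapP [j]; rewrite mem_iota => hj ->.
  by rewrite /in_skew /=; lia.
case: c => r j; rewrite /in_skew /= => /and4P [r_gt0 r_le lo hi].
exists r.-1; first by rewrite mem_iota; lia.
by apply/mapP; exists j; rewrite ?prednK // mem_iota; lia.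
Qed.

Lemma uniq_skew_cells a b : uniq (skew_cells a b).
Proof.
apply: allpairs_uniq_dep => [|r _|[r j] [r' j'] _ _ /= [-> ->]] //; exact: iota_uniq.
Qed.

Lemma in_skew_row_between a b r j k l :
  in_skew a b (r, j) -> in_skew a b (r, l) -> j <= k <= l -> in_skew a b (r, k).
Proof. by rewrite /in_skew /=; lia. Qed.

Lemma subcomp_leq_nth b a : subcomp b a -> forall j, nth 0 b j <= nth 0 a j.
Proof.
case/andP=> _ /allP le_ba j; have [jb|bj] := ltnP j (size b).
  by apply: le_ba; rewrite mem_iota.
by rewrite nth_default.
Qed.

Lemma sumn_nth_widen (s : seq nat) n :
  size s <= n -> sumn s = \sum_(0 <= r < n) nth 0 s r.
Proof.
move=> le_sn; rewrite sumnE (big_nth 0) (big_nat_widen _ _ _ _ _ le_sn) big_mkcond.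
by apply: eq_bigr => r _; case: ltnP => // ?; rewrite nth_default.
Qed.

Lemma size_skew_cells a b : subcomp b a -> size (skew_cells a b) = skew_size a b.
Proof.
move=> ba; rewrite size_flatten /shape -map_comp sumnE big_map.
rewrite /skew_size (sumn_nth_widen (leqnn (size a))).
rewrite (sumn_nth_widen (n := size a)); last by case/andP: ba.
rewrite -sumnB; last by move=> r _; apply: subcomp_leq_nth.
by rewrite /index_iota subn0; apply: eq_bigr => r _; rewrite /= size_map size_iota.
Qed.

(* Entry k of a tableau sits at index k.-1, so [adj_swap i] exchanges the
   indices of the entries i and i+1. *)
Definition adj_swap (i k : nat) : nat :=
  if k == i.-1 then i else if k == i then i.-1 else k.

Lemma swap_entriesE i (w : tableau) :
  swap_entries i w = [seq nth (0, 0) w (adj_swap i k) | k <- iota 0 (size w)].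
Proof. by apply: eq_map => k; rewrite /adj_swap; case: ifP => //; case: ifP. Qed.

Lemma size_swap_entries i (w : tableau) : size (swap_entries i w) = size w.
Proof. by rewrite size_map size_iota. Qed.

Lemma mem_pos (w : tableau) k : 0 < k <= size w -> pos w k \in w.
Proof. by case: k => // k; apply: mem_nth. Qed.

Lemma index_pos (w : tableau) k :
  uniq w -> 0 < k <= size w -> index (pos w k) w = k.-1.
Proof. by case: k => // k hu hk; rewrite index_uniq. Qed.

Lemma pos_succ_neq (w : tableau) i :
  uniq w -> 0 < i -> i < size w -> pos w i.+1 != pos w i.
Proof.
by move=> hu i_gt0 i_lt; rewrite /pos /= nth_uniq ?(leq_ltn_trans (leq_pred i)) //; lia.
Qed.

Section AdjacentSwap.

Variable i : nat.
Hypothesis i_gt0 : 0 < i.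

Variant adj_swap_spec k : nat -> Set :=
  | AdjSwapPred of k = i.-1 : adj_swap_spec k i
  | AdjSwapSelf of k = i : adj_swap_spec k i.-1
  | AdjSwapFix of k <> i.-1 & k <> i : adj_swap_spec k k.

Lemma adj_swapP k : adj_swap_spec k (adj_swap i k).
Proof. by rewrite /adj_swap; case: eqP => [|?]; [|case: eqP => ?]; constructor. Qed.

Lemma adj_swapK : involutive (adj_swap i).
Proof. by move=> k; case: (adj_swapP k) => *; case: adj_swapP => *; lia. Qed.

Lemma adj_swap_ltn n k : i < n -> k < n -> adj_swap i k < n.
Proof. by case: adj_swapP => *; lia. Qed.

Lemma adj_swap_mono k l :
  k < l -> ~ (k = i.-1 /\ l = i) -> adj_swap i k < adj_swap i l.
Proof. by case: (adj_swapP k) => *; case: (adj_swapP l) => *; lia. Qed.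

Lemma nth_swap_entries (w : tableau) k :
  k < size w -> nth (0, 0) (swap_entries i w) k = nth (0, 0) w (adj_swap i k).
Proof. by move=> hk; rewrite swap_entriesE (nth_map 0) ?size_iota // nth_iota. Qed.

Lemma pos_swap_entries (w : tableau) :
  i < size w -> pos (swap_entries i w) i = pos w i.+1.
Proof.
move=> i_lt; rewrite /pos nth_swap_entries; last lia.
by case: adj_swapP => //; lia.
Qed.

Lemma pos_swap_entriesS (w : tableau) :
  i < size w -> pos (swap_entries i w) i.+1 = pos w i.
Proof. by move=> i_lt; rewrite /pos nth_swap_entries //; case: adj_swapP => //; lia. Qed.

Lemma swap_entriesK (w : tableau) :
  i < size w -> swap_entries i (swap_entries i w) = w.
Proof.
move=> i_lt; apply: (@eq_from_nth _ (0, 0)); rewrite ?size_swap_entries // => k hk.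
by rewrite !nth_swap_entries ?size_swap_entries ?adj_swapK ?adj_swap_ltn.
Qed.

Lemma perm_swap_entries (w : tableau) : i < size w -> perm_eq (swap_entries i w) w.
Proof.
move=> i_lt; rewrite swap_entriesE -{3}(mkseq_nth (0, 0) w) (map_comp (nth _ w)).
apply: perm_map; apply: uniq_perm;
  rewrite ?(map_inj_uniq (inv_inj adj_swapK)) ?iota_uniq //.
move=> k; rewrite mem_iota; apply/mapP/idP => [[l]|hk].
  by rewrite mem_iota => hl ->; apply: adj_swap_ltn.
by exists (adj_swap i k); rewrite ?adj_swapK // mem_iota adj_swap_ltn.
Qed.

Lemma index_swap_entries (w : tableau) z : i < size w ->
  uniq w -> z \in w -> index z (swap_entries i w) = adj_swap i (index z w).
Proof.
move=> i_lt hu hz; have hk : index z w < size w by rewrite index_mem.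
have nth_z : nth (0, 0) (swap_entries i w) (adj_swap i (index z w)) = z.
  by rewrite nth_swap_entries ?adj_swapK ?nth_index ?adj_swap_ltn.
rewrite -{1}nth_z index_uniq ?(perm_uniq (perm_swap_entries i_lt)) //.
by rewrite size_swap_entries adj_swap_ltn.
Qed.

End AdjacentSwap.

Definition row_before (x y : cell) : bool := (x.1 == y.1) && (x.2 < y.2).
Definition col_below (x y : cell) : bool := (x.2 == y.2) && (x.1 < y.1).

Definition increasing_along (R : rel cell) (w : tableau) : Prop :=
  {in w &, forall x y, R x y -> index x w < index y w}.

Section Fillings.

Variables (a b : seq nat) (w : tableau).
Hypothesis w_fill : is_filling a b w.

Lemma mem_filling c : (c \in w) = in_skew a b c.
Proof. by rewrite (perm_mem w_fill) mem_skew_cells. Qed.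

Lemma uniq_filling : uniq w.
Proof. by rewrite (perm_uniq w_fill) uniq_skew_cells. Qed.

Lemma size_filling : subcomp b a -> size w = skew_size a b.
Proof. by move=> ba; rewrite (perm_size w_fill) size_skew_cells. Qed.

End Fillings.

Lemma is_SETP a b w : is_SET a b w <->
  [/\ is_filling a b w, increasing_along row_before w & increasing_along col_below w].
Proof.
split=> [[w_fill [w_row w_col]]|[w_fill w_row w_col]].
  split=> // [[r j] [r' j']|[r j] [r' j']];
    rewrite !(mem_filling w_fill) /row_before /col_below /=;
    move=> hx hy /andP [/eqP eq lt]; rewrite -ltnS.
  - by rewrite -eq in hy *; apply: w_row.
  - by rewrite -eq in hy *; apply: w_col.
split=> //; split=> [r j j'|r r' j] hx hy lt; rewrite /entry ltnS.
- by apply: w_row; rewrite ?(mem_filling w_fill) // /row_before /= eqxx.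
- by apply: w_col; rewrite ?(mem_filling w_fill) // /col_below /= eqxx.
Qed.

Section IncreasingAlong.

Variables (R : rel cell) (w : tableau) (i : nat).
Hypotheses (w_uniq : uniq w) (i_gt0 : 0 < i) (i_lt : i < size w).
Hypothesis w_incr : increasing_along R w.

Let pos_i_mem : pos w i \in w. Proof. by apply: mem_pos; lia. Qed.
Let pos_iS_mem : pos w i.+1 \in w. Proof. exact: mem_pos. Qed.
Let index_pos_i : index (pos w i) w = i.-1. Proof. by apply: index_pos; lia. Qed.
Let index_pos_iS : index (pos w i.+1) w = i. Proof. exact: index_pos. Qed.

Lemma increasing_along_adj_revF : R (pos w i.+1) (pos w i) = false.
Proof.
apply/negP => /(w_incr pos_iS_mem pos_i_mem).
by rewrite index_pos_i index_pos_iS; lia.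
Qed.

Lemma increasing_along_no_between z :
  z \in w -> R (pos w i) z -> R z (pos w i.+1) -> False.
Proof.
move=> hz /(w_incr pos_i_mem hz) lo /(w_incr hz pos_iS_mem) hi.
by move: lo hi; rewrite index_pos_i index_pos_iS; lia.
Qed.

Lemma increasing_along_swap :
  ~~ R (pos w i) (pos w i.+1) -> increasing_along R (swap_entries i w).
Proof.
move=> notR x y; rewrite !(perm_mem (perm_swap_entries i_gt0 i_lt)) => hx hy xRy.
rewrite !index_swap_entries //; apply: adj_swap_mono => //; first exact: w_incr.
by move=> [ix iy]; move: notR; rewrite /pos /= -ix -iy !nth_index // xRy.
Qed.

End IncreasingAlong.

Lemma pi_op_Some i (w w' : tableau) : pi_op i w = Some w' ->
  w' = w \/ (pos w i.+1).1 < (pos w i).1 /\ w' = swap_entries i w.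
Proof.
rewrite /pi_op; case: ifP => [_ [<-]|_]; first by left.
by case: ifP => // lt [<-]; right.
Qed.

Lemma pi_op_swap_entries i (w : tableau) : 0 < i -> i < size w ->
  (pos w i).1 < (pos w i.+1).1 -> pi_op i (swap_entries i w) = Some w.
Proof.
move=> i_gt0 i_lt lt.
rewrite /pi_op pos_swap_entries // pos_swap_entriesS //.
by rewrite ltnNge ltnW //= lt swap_entriesK.
Qed.

Section PiOrder.

Variable n : nat.

Lemma pi_step_perm T T' : size T = n -> pi_step n T T' -> perm_eq T' T.
Proof.
move=> <- [i [i_gt0 [i_lt /pi_op_Some [->|[_ ->]]]]]; first exact: perm_refl.
exact: perm_swap_entries.
Qed.

Lemma pi_le_perm T W : size T = n -> pi_le n T W -> perm_eq W T.
Proof.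
move=> sT hTW; elim: hTW sT => [T0|T0 T1 T2 step _ IH] sT; first exact: perm_refl.
have p10 := pi_step_perm sT step.
by apply: (perm_trans _ p10); apply: IH; rewrite (perm_size p10).
Qed.

Lemma pi_le_last_swap T M : pi_le n T M -> T = M \/
  exists W i, [/\ pi_le n T W, 0 < i, i < n, (pos W i.+1).1 < (pos W i).1
                & M = swap_entries i W].
Proof.
elim=> [T0|T0 T1 T2 [i [i_gt0 [i_lt hop]]] hle [<-|[W [j [hW j_gt0 j_lt lt ->]]]]].
- by left.
- case: (pi_op_Some hop) => [->|[lt ->]]; first by left.
  by right; exists T0, i; split => //; apply: pi_le_refl.
- by right; exists W, j; split => //; apply: pi_le_step hW; exists i.
Qed.

Variable R : rel cell.
Hypothesis R_lower : forall x y, R x y -> x.1 < y.1.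

Lemma increasing_along_pi_le T W : pi_le n T W ->
  uniq T -> size T = n -> increasing_along R T -> increasing_along R W.
Proof.
elim=> // T0 T1 T2 step _ IH uT sT incr.
have p10 := pi_step_perm sT step.
apply: IH; rewrite ?(perm_uniq p10) ?(perm_size p10) //.
case: step => i [i_gt0 [i_lt /pi_op_Some [->|[lt ->]]]] //.
apply: increasing_along_swap; rewrite ?sT //.
by apply/negP => /R_lower; rewrite ltnNge ltnW.
Qed.

End PiOrder.

Lemma col_below_lower x y : col_below x y -> x.1 < y.1.
Proof. by case/andP. Qed.

Section Minimality.

Variables (a b : seq nat) (M : tableau) (i : nat).
Hypotheses (M_SET : is_SET a b M) (i_gt0 : 0 < i) (i_lt : i < size M).

Lemma SET_row_succ : (pos M i).1 = (pos M i.+1).1 ->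
  pos M i.+1 = ((pos M i).1, (pos M i).2.+1).
Proof.
have /is_SETP [M_fill M_row _] := M_SET; have M_uniq := uniq_filling M_fill.
have := increasing_along_no_between M_uniq i_gt0 i_lt M_row.
have := increasing_along_adj_revF M_uniq i_gt0 i_lt M_row.
have := pos_succ_neq M_uniq i_gt0 i_lt.
have := mem_pos (w := M) (k := i.+1) i_lt.
have := mem_pos (w := M) (k := i) ltac:(lia).
rewrite !(mem_filling M_fill) /row_before.
case: (pos M i) => r j; case: (pos M i.+1) => r' j' /=.
move=> c_in d_in neq not_rev no_between eq_r; subst r'.
case: (ltngtP j j') => [lt|gt|eq]; last by move: neq; rewrite eq eqxx.
- have [-> //|ne] := eqVneq j' j.+1.
  have e_in : in_skew a b (r, j.+1) by apply: in_skew_row_between c_in d_in _; lia.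
  by case: (no_between (r, j.+1)); rewrite ?(mem_filling M_fill) //= eqxx //; lia.
- by move: not_rev; rewrite eqxx gt.
Qed.

Lemma swap_entries_SET : (pos M i).1 != (pos M i.+1).1 ->
  (pos M i).2 != (pos M i.+1).2 -> is_SET a b (swap_entries i M).
Proof.
have /is_SETP [M_fill M_row M_col] := M_SET; have M_uniq := uniq_filling M_fill.
move=> ne_row ne_col; apply/is_SETP; split.
- exact: perm_trans (perm_swap_entries i_gt0 i_lt) M_fill.
- by apply: increasing_along_swap; rewrite // /row_before negb_and ne_row.
- by apply: increasing_along_swap; rewrite // /col_below negb_and ne_col.
Qed.

End Minimality.

Definition locally_minimal (a b : seq nat) (M : tableau) (i : nat) : Prop :=
  let c := pos M i in let d := pos M i.+1 in
  d = (c.1, c.2.+1) \/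
  (d.2 = c.2 /\ c.1 < d.1 /\ (forall r, c.1 < r -> r < d.1 -> ~~ in_skew a b (r, c.2))) \/
  d.1 < c.1.

Lemma minimal_SET_locally_minimal a b M i : subcomp b a -> minimal_SET a b M ->
  0 < i -> i < skew_size a b -> locally_minimal a b M i.
Proof.
move=> ba [M_SET not_above] i_gt0; have /is_SETP [M_fill _ M_col] := M_SET.
have M_uniq := uniq_filling M_fill.
move=> i_lt; have iM : i < size M by rewrite (size_filling M_fill ba).
rewrite /locally_minimal.
case: (ltngtP (pos M i).1 (pos M i.+1).1) => [below|_|same].
- have [same_col|ne_col] := eqVneq (pos M i.+1).2 (pos M i).2.
    right; left; split=> //; split=> // r lo hi; apply/negP => r_in.
    apply: (increasing_along_no_between M_uniq i_gt0 iM M_col (z := (r, (pos M i).2))).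
    + by rewrite (mem_filling M_fill).
    + by rewrite /col_below /= eqxx.
    + by rewrite /col_below /= same_col eqxx.
  case: not_above; exists (swap_entries i M); split; last split.
  + by apply: swap_entries_SET; rewrite // ?(ltn_eqF below) // eq_sym.
  + move/(congr1 (pos^~ i)); rewrite pos_swap_entries // => eq_pos.
    by move: below; rewrite eq_pos ltnn.
  + apply: pi_le_step (pi_le_refl _ _); exists i.
    by do !split => //; apply: pi_op_swap_entries.
- by right; right.
- by left; apply: (SET_row_succ M_SET).
Qed.

Lemma locally_minimal_minimal_SET a b M : subcomp b a -> is_SET a b M ->
  (forall i, 0 < i -> i < skew_size a b -> locally_minimal a b M i) ->
  minimal_SET a b M.
Proof.
move=> ba M_SET loc_min; split=> // [[T [/is_SETP [T_fill _ T_col] [neq le_TM]]]].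
case: (pi_le_last_swap le_TM) => [/neq //|[W [i [le_TW i_gt0 i_lt W_desc M_eq]]]].
have sT := size_filling T_fill ba; have p_WT := pi_le_perm sT le_TW.
have W_uniq : uniq W by rewrite (perm_uniq p_WT) (uniq_filling T_fill).
have iW : i < size W by rewrite (perm_size p_WT) sT.
have W_col :=
  increasing_along_pi_le col_below_lower le_TW (uniq_filling T_fill) sT T_col.
have := increasing_along_adj_revF W_uniq i_gt0 iW W_col.
have := loc_min i i_gt0 i_lt; rewrite /locally_minimal M_eq.
rewrite pos_swap_entries // pos_swap_entriesS //; move: W_desc.
case: (pos W i) => r j; case: (pos W i.+1) => r' j' /= lt.
rewrite /col_below /=; case=> [[eq_r _]|[[-> [_ _]]|gt]]; lia.
Qed.

Theorem lemma3p1 (alpha beta : seq nat) :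
  composition alpha -> composition beta -> subcomp beta alpha ->
  forall M : tableau, is_SET alpha beta M ->
  (minimal_SET alpha beta M <->
   forall i, 0 < i -> i < skew_size alpha beta ->
     let c := pos M i in let d := pos M i.+1 in
     (* (1) consecutive cells of the same row *)
     (d = (c.1, c.2.+1)) \/
     (* (2) same column, i+1 above i, no cell of alpha/beta between them *)
     (d.2 = c.2 /\ c.1 < d.1 /\
      (forall r, c.1 < r -> r < d.1 -> ~~ in_skew alpha beta (r, c.2))) \/
     (* (3) i in a strictly higher row than i+1 *)
     (d.1 < c.1)).
Proof.
move=> _ _ ba M M_SET; split=> [M_min i|].
  exact: minimal_SET_locally_minimal ba M_min.
exact: locally_minimal_minimal_SET.
Qed.
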